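(* Let $1\le d<n$, $r=d(n-d)$. (i) For $\underline i,\underline j\in I(d,n)$, $\underline i\le\underline j$ if and only if $\underline j$ can be obtained from $\underline i$ by applying a suitable monomial in the root operators $f_{s,h}$. (ii) Let $\mathfrak C:\underline i_r>\cdots>\underline i_0$ be a maximal chain in $I(d,n)$. Then for each $t=1,\dots,r$ there exist $s_t,h_t$ with $\underline i_t=f_{s_t,h_t}(\underline i_{t-1})$; moreover each root operator $f_{s,h}$ with $1\le s\le n-1$, $1\le h\le d$, $n-d+h>s\ge h$ appears in the list $(f_{s_t,h_t}\mid t=1,\dots,r)$ exactly once. (iii) If moreover $\underline i_h$ does not contain $n$ for $h=1,\dots,t$ and $\underline i_h$ contains $n$ for all $t<h\le r$, then $\underline i_{t+1}=f_{n-1,d}(\underline i_t)$, i.e. $s_{t+1}=n-1$ and $h_{t+1}=d$.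
   Context: $I(d,n)$ is the set of $d$-element subsets of $\{1,\dots,n\}$ written as increasing sequences $i_1\cdots i_d$, with partial order $\underline i\le\underline j$ iff $i_k\le j_k$ for all $k$. Maximal chains are maximal totally ordered subsets; they have the form $\underline i_r>\cdots>\underline i_0$ from $(n-d+1)\cdots n$ down to $12\cdots d$. For $1\le h\le d$ and $h\le s<n-d+h$, $f_{s,h}$ acts on $I(d,n)\sqcup\{0\}$ by $f_{s,h}(0)=0$, $f_{s,h}(i_1\cdots i_d)=i_1\cdots i_{h-1}(s+1)i_{h+1}\cdots i_d$ if $i_h=s$ and ($h=d$ or $i_{h+1}\ge s+2$), and $0$ otherwise. *)

From mathcomp Require Import all_boot.
Set Implicit Arguments. Unset Strict Implicit. Unset Printing Implicit Defensive.

(* An element of I(d,n): increasing sequence i_1 < ... < i_d with entries in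
   {1,...,n}. Positions are 1-based in the paper, 0-based in seq (nth). *)
Definition inI (d n : nat) (i : seq nat) : bool :=
  [&& size i == d, sorted ltn i & all (fun k => 0 < k <= n) i].

Definition leI (i j : seq nat) : bool := all2 leq i j.
Definition ltI (i j : seq nat) : bool := leI i j && (i != j).

Definition isChain (d n : nat) (C : seq nat -> Prop) : Prop :=
  (forall x, C x -> inI d n x) /\
  (forall x y, C x -> C y -> leI x y \/ leI y x).

Definition maxChain (d n : nat) (C : seq nat -> Prop) : Prop :=
  isChain d n C /\
  (forall C' : seq nat -> Prop, isChain d n C' ->
     (forall x, C x -> C' x) -> forall x, C' x -> C x).

(* Root operator f_{s,h} on I(d,n) ⊔ {0}; 0 is represented by None.
   f_{s,h}(i) replaces i_h = s by s+1 when h = d or i_{h+1} >= s+2. *)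
Definition rootop (d s h : nat) (i : seq nat) : option (seq nat) :=
  if (nth 0 i h.-1 == s) && ((h == d) || (s.+2 <= nth 0 i h))
  then Some (set_nth 0 i h.-1 s.+1) else None.

Definition rootop0 (d s h : nat) (o : option (seq nat)) : option (seq nat) :=
  obind (rootop d s h) o.

Definition validop (d n : nat) (p : nat * nat) : bool :=
  (1 <= p.2 <= d) && (p.2 <= p.1 < n - d + p.2).

(* A monomial in the root operators, given as a word (list of indices),
   applied to an element of I(d,n) ⊔ {0}. *)
Definition applyops (d : nat) (ops : seq (nat * nat)) (o : option (seq nat))
  : option (seq nat) :=
  foldr (fun p acc => rootop0 d p.1 p.2 acc) o ops.

From mathcomp Require Import all_boot zify.
Set Implicit Arguments. Unset Strict Implicit. Unset Printing Implicit Defensive.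

(* A root operator f_(s,h) raises the h-th entry of a sequence by one, so every
   application raises the entry sum by one.  Conversely, if i < j then raising
   the last entry where i and j differ stays inside I(d,n) and below j; this
   gives (i), and it shows that consecutive members of a maximal chain differ by
   a single root operator, since the raised element is comparable to the whole
   chain.  A maximal chain runs from 1 2 ... d to (n-d+1) ... n, hence has
   d(n-d) steps, and along it the h-th entry climbs from h to n-d+h by unit
   steps, passing from s to s+1 exactly once.  For (iii), the step at which n
   first appears must raise n-1 to n, and that entry must be the last one. *)

Lemma leIP x y :
  leI x y <-> size x = size y /\ forall k, nth 0 x k <= nth 0 y k.
Proof.
rewrite /leI; elim: x y => [|a x IH] [|b y] /=.
- by split => // _; split => // k; rewrite nth_nil.
- by split => // -[].
- by split => // -[].
- split.
  + by move/andP=> [ab /IH [-> H]]; split => // -[|k] //=.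
  + move=> [[/eqP sxy] H]; apply/andP; split; first exact: (H 0).
    by apply/IH; split; [apply/eqP | move=> k; apply: (H k.+1)].
Qed.

Lemma leI_refl : reflexive leI.
Proof. by move=> x; apply/leIP. Qed.

Lemma leI_trans : transitive leI.
Proof.
move=> y x z /leIP [sxy Hxy] /leIP [syz Hyz]; apply/leIP.
by split=> [|k]; [rewrite sxy | apply: leq_trans (Hxy k) (Hyz k)].
Qed.

Lemma leI_anti x y : leI x y -> leI y x -> x = y.
Proof.
move=> /leIP [sxy Hxy] /leIP [_ Hyx]; apply: (eq_from_nth (x0 := 0)) => // k _.
by apply/eqP; rewrite eqn_leq Hxy Hyx.
Qed.

Lemma leI_sumn x y : leI x y -> sumn x <= sumn y.
Proof. by rewrite /leI; elim: x y => [|a x IH] [|b y] //= /andP [ab /IH]; lia. Qed.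

Lemma ltI_sumn x y : leI x y -> x != y -> sumn x < sumn y.
Proof.
rewrite /leI; elim: x y => [|a x IH] [|b y] //= /andP [ab Hxy] x_neq_y.
have := leI_sumn Hxy; have [exy | nxy] := eqVneq x y; last by move: (IH _ Hxy nxy); lia.
subst y; have : a != b by apply: contra x_neq_y => /eqP ->.
lia.
Qed.

Lemma inIP d n x : inI d n x <->
  [/\ size x = d, forall i, i.+1 < d -> nth 0 x i < nth 0 x i.+1
    & forall i, i < d -> 0 < nth 0 x i <= n].
Proof.
split.
- by case/and3P => [/eqP <- /(sortedP 0) incr /(all_nthP 0) bnd].
- move=> [<- incr bnd]; apply/and3P; split => //.
  + by apply/(sortedP 0).
  + by apply/(all_nthP 0).
Qed.

Lemma inI_nth_gap d n x i j : inI d n x -> i <= j < d -> nth 0 x i + (j - i) <= nth 0 x j.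
Proof.
case/inIP => _ incr _; elim: j => [|j IH] /andP [le_ij lt_jd].
  by rewrite (_ : i = 0) ?addn0 //; lia.
have [lt_ij | ge_ij] := ltnP i j.+1; last by rewrite (_ : i = j.+1) ?subnn ?addn0 //; lia.
have := IH (ltac:(apply/andP; lia)); have := incr j lt_jd; lia.
Qed.

Lemma inI_nth_bounds d n x k : inI d n x -> k < d ->
  k < nth 0 x k /\ nth 0 x k + d <= n + k.+1.
Proof.
move=> Ix lt_kd; have [_ _ bnd] := iffLR (inIP d n x) Ix.
have := inI_nth_gap (i := 0) (j := k) Ix (ltac:(apply/andP; lia)).
have := inI_nth_gap (i := k) (j := d.-1) Ix (ltac:(apply/andP; lia)).
have := bnd 0 (ltac:(lia)); have := bnd d.-1 (ltac:(lia)); lia.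
Qed.

Definition raise k (x : seq nat) := set_nth 0 x k (nth 0 x k).+1.

Definition raisable k (x : seq nat) :=
  (k.+1 == size x) || ((nth 0 x k).+2 <= nth 0 x k.+1).

Lemma nth_raise k x j :
  nth 0 (raise k x) j = if j == k then (nth 0 x k).+1 else nth 0 x j.
Proof. by rewrite nth_set_nth. Qed.

Lemma size_raise k x : k < size x -> size (raise k x) = size x.
Proof. by move=> lt_kx; rewrite size_set_nth; apply/maxn_idPr. Qed.

Lemma raise_neq k x : x != raise k x.
Proof. by apply/eqP => /(congr1 (nth 0 ^~ k)); rewrite nth_raise eqxx; lia. Qed.

Lemma leI_raise k x : k < size x -> leI x (raise k x).
Proof.
move=> lt_kx; apply/leIP; split=> [|j]; first by rewrite size_raise.
by rewrite nth_raise; case: eqP => [->|].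
Qed.

Lemma sumn_raise k x : k < size x -> sumn (raise k x) = (sumn x).+1.
Proof. by rewrite /raise; elim: x k => [|a x IH] [|k] //= lt_kx; rewrite ?IH; lia. Qed.

Lemma raise_inI d n x k : inI d n x -> k < d -> raisable k x -> nth 0 x k < n ->
  inI d n (raise k x).
Proof.
case/inIP=> sx incr bnd lt_kd; rewrite /raisable sx => room lt_xn; apply/inIP.
split=> [|i lt_id|i lt_id]; first by rewrite size_raise sx.
- rewrite !nth_raise; have := incr i lt_id.
  by case: ifP => [/eqP eq_ik|_]; case: ifP => [/eqP eq_ik1|_]; subst; move: room; lia.
- by rewrite nth_raise; have := bnd i lt_id; case: eqP => [->|]; lia.
Qed.

Lemma rootop_raise d k x : size x = d -> raisable k x ->
  rootop d (nth 0 x k) k.+1 x = Some (raise k x).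
Proof. by move=> sx; rewrite /raisable /rootop /= eqxx sx => ->. Qed.

Lemma rootop_Some d s h x y : rootop d s h x = Some y ->
  [/\ nth 0 x h.-1 = s, y = raise h.-1 x & (h == d) || (s.+2 <= nth 0 x h)].
Proof. by rewrite /rootop; case: ifP => // /andP [/eqP <- room] [<-]. Qed.

(* Raise the last position k where x and y differ: x_k < y_k < y_(k+1) = x_(k+1). *)
Lemma leI_raisable x y : sorted ltn y -> leI x y -> x != y ->
  exists k, [/\ k < size x, raisable k x & leI (raise k x) y].
Proof.
elim: x y => [|a x IH] [|b y] //=; rewrite /leI /= => sorted_by /andP [le_ab le_xy] neq.
have [eq_xy | neq_xy] := eqVneq x y.
- subst y; have lt_ab : a < b by rewrite ltn_neqAle le_ab andbT; apply: contra neq => /eqP ->.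
  exists 0; split => //; last by rewrite /raise /= lt_ab; apply: leI_refl.
  by rewrite /raisable /=; case: x {IH le_xy neq} sorted_by => [|c x] //= /andP [lt_bc _]; lia.
- have [k [lt_kx room le_raise]] := IH y (path_sorted sorted_by) le_xy neq_xy.
  by exists k.+1; split; rewrite // /raise /= le_ab.
Qed.

Lemma leI_cover d n x y : inI d n x -> inI d n y -> leI x y -> x != y ->
  exists k, [/\ validop d n (nth 0 x k, k.+1),
    rootop d (nth 0 x k) k.+1 x = Some (raise k x),
    inI d n (raise k x) & leI (raise k x) y].
Proof.
move=> Ix Iy le_xy neq_xy; have [sx _ _] := iffLR (inIP _ _ _) Ix.
have [_ sorted_y _] := and3P Iy.
have [k [lt_kx room le_raise]] := leI_raisable sorted_y le_xy neq_xy.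
have lt_kd : k < d by rewrite -sx.
have [lb _] := inI_nth_bounds Ix lt_kd; have [_ ub] := inI_nth_bounds Iy lt_kd.
have [_ /(_ k)] := iffLR (leIP _ _) le_raise; rewrite nth_raise eqxx => lt_xy.
exists k; split => //; first by rewrite /validop /=; lia.
- exact: rootop_raise.
- by apply: raise_inI => //; lia.
Qed.

Lemma applyops_leI d n ops x y : all (validop d n) ops ->
  applyops d ops (Some x) = Some y -> size x = d -> leI x y.
Proof.
move=> + + sx; elim: ops y => [|[s h] ops IH] y /=; first by move=> _ [<-]; apply: leI_refl.
case/andP=> valid_sh valid_ops; rewrite /rootop0.
case E: (applyops d ops (Some x)) => [z|] //= /rootop_Some [_ -> _].
have le_xz := IH z valid_ops E.
have [/esym sz _] := iffLR (leIP _ _) le_xz.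
apply: leI_trans le_xz (leI_raise _); rewrite sz.
by move: valid_sh; rewrite /validop sx /=; lia.
Qed.

Lemma leI_applyops d n x y : inI d n x -> inI d n y -> leI x y ->
  exists ops, all (validop d n) ops /\ applyops d ops (Some x) = Some y.
Proof.
have [m] := ubnP (sumn y - sumn x); elim: m x => // m IH x lt_m Ix Iy le_xy.
have [-> | neq_xy] := eqVneq x y; first by exists [::].
have [k [valid step Iz le_zy]] := leI_cover Ix Iy le_xy neq_xy.
have [sx _ _] := iffLR (inIP _ _ _) Ix.
have lt_kx : k < size x by move: (valid); rewrite /validop sx /=; lia.
have lt_sumn := ltI_sumn (leI_raise lt_kx) (raise_neq k x).
have le_sumn := leI_sumn le_zy.
have [|ops [valid_ops apply_ops]] := IH (raise k x) _ Iz Iy le_zy; first lia.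
exists (ops ++ [:: (nth 0 x k, k.+1)]); split; first by rewrite all_cat valid_ops /= valid.
by rewrite /applyops foldr_cat /= step.
Qed.

Definition botI d := iota 1 d.
Definition topI d n := iota (n - d).+1 d.

Lemma botI_inI d n : d <= n -> inI d n (botI d).
Proof.
by move=> le_dn; apply/inIP; rewrite size_iota; split=> // i lt_id; rewrite !nth_iota //; lia.
Qed.

Lemma topI_inI d n : d <= n -> inI d n (topI d n).
Proof.
by move=> le_dn; apply/inIP; rewrite size_iota; split=> // i lt_id; rewrite !nth_iota //; lia.
Qed.

Lemma botI_min d n x : inI d n x -> leI (botI d) x.
Proof.
move=> Ix; have [sx _ _] := iffLR (inIP _ _ _) Ix.
apply/leIP; rewrite size_iota; split=> // k.
have [lt_kd | ge_kd] := ltnP k d; last by rewrite nth_default ?size_iota.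
by rewrite nth_iota //; have [lb _] := inI_nth_bounds Ix lt_kd; lia.
Qed.

Lemma topI_max d n x : inI d n x -> leI x (topI d n).
Proof.
move=> Ix; have [sx _ _] := iffLR (inIP _ _ _) Ix.
apply/leIP; rewrite size_iota; split=> // k.
have [lt_kd | ge_kd] := ltnP k d; last by rewrite nth_default ?sx.
by rewrite nth_iota //; have [_ ub] := inI_nth_bounds Ix lt_kd; lia.
Qed.

Lemma sumn_topI d n : sumn (topI d n) = d * (n - d) + sumn (botI d).
Proof.
have shift s : sumn (map (addn (n - d)) s) = size s * (n - d) + sumn s.
  by elim: s => //= a s ->; lia.
by rewrite /topI /botI -addn1 iotaDl shift size_iota.
Qed.

Lemma count_unit_steps (f : nat -> nat) r s :
  (forall t, t < r -> f t.+1 = f t \/ f t.+1 = (f t).+1) ->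
  f 0 <= f r /\
  count (fun t => (f t == s) && (f t.+1 == s.+1)) (iota 0 r) = (f 0 <= s < f r).
Proof.
elim: r => [|r IH] steps; first by split => //=; lia.
have [mono cnt] := IH (fun t lt_tr => steps t (ltnW lt_tr)).
rewrite -[in iota _ _]addn1 iotaD count_cat cnt /= add0n.
by case: (steps r (ltnSn r)) => ->; split; lia.
Qed.

Lemma exists_seq_nth (T : Type) (x0 : T) (P : nat -> T -> Prop) m :
  (forall t, t < m -> exists p, P t p) ->
  exists L, size L = m /\ forall t, t < m -> P t (nth x0 L t).
Proof.
elim: m => [|m IH] exP; first by exists [::].
have [L [sL PL]] := IH (fun t lt_tm => exP t (ltnW lt_tm)).
have [p Pp] := exP m (ltnSn m).
exists (rcons L p); split=> [|t]; first by rewrite size_rcons sL.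
rewrite ltnS leq_eqVlt nth_rcons sL => /orP [/eqP -> | lt_tm]; first by rewrite ltnn eqxx.
by rewrite lt_tm; apply: PL.
Qed.

Lemma rootop_nth d s h x y k : rootop d s h x = Some y ->
  nth 0 y k = nth 0 x k \/ nth 0 y k = (nth 0 x k).+1.
Proof. by case/rootop_Some=> [<- -> _]; rewrite nth_raise; case: eqP => [->|]; [right | left]. Qed.

Lemma rootop_label d s h s' h' x y : 0 < h -> 0 < h' -> rootop d s' h' x = Some y ->
  ((s', h') == (s, h)) = (nth 0 x h.-1 == s) && (nth 0 y h.-1 == s.+1).
Proof.
move=> h_gt0 h'_gt0 /rootop_Some [<- -> _]; rewrite nth_raise xpair_eqE.
have [eq_h | neq_h] := eqVneq h.-1 h'.-1.
- by rewrite eq_h eqSS andbb (_ : h' = h) ?eqxx ?andbT //; lia.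
- rewrite (_ : h' == h = false) ?andbF; last by apply/eqP => eq_h'; rewrite eq_h' eqxx in neq_h.
  by case: eqP => [->|]; rewrite ?andbF //; lia.
Qed.

Lemma rootop_reach_max d n s h x y : inI d n x -> 1 <= h <= d ->
  n \notin x -> n \in y -> rootop d s h x = Some y -> (s, h) = (n.-1, d).
Proof.
move=> Ix /andP [h_gt0 le_hd] x_notin y_in /rootop_Some [xh eq_y room]; subst y.
have [sx _ bnd] := iffLR (inIP _ _ _) Ix.
have [m lt_my] := nthP 0 y_in; rewrite size_raise ?sx in lt_my; last lia.
rewrite nth_raise; case: eqP => [_ xh1 | _ xm]; last by rewrite -xm mem_nth ?sx in x_notin.
have eq_hd : h = d.
  case/orP: room => [/eqP //| room]; have := bnd h; lia.
by rewrite eq_hd; congr pair; lia.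
Qed.

Section MaximalChain.

Variables (d n : nat) (c : seq (seq nat)).
Hypotheses (le_dn : d <= n) (c_sorted : sorted ltI c)
  (c_max : maxChain d n (fun x => x \in c)).

Let r := d * (n - d).

Lemma chain_inI x : x \in c -> inI d n x.
Proof. by case: c_max => -[c_inI _] _; apply: c_inI. Qed.

Lemma chain_mem z : inI d n z -> (forall x, x \in c -> leI x z \/ leI z x) -> z \in c.
Proof.
case: c_max => -[_ c_total] c_maximal Iz z_cmp.
apply: (c_maximal (fun x => x \in c \/ x = z)); [split | by left | by right].
- by move=> x [/chain_inI | ->].
- move=> x y [cx | ->] [cy | ->]; first exact: c_total.
  + exact: z_cmp.
  + by case: (z_cmp y cy); [right | left].
  + by left; apply: leI_refl.
Qed.

Lemma chain_leI i j : i <= j -> j < size c -> leI (nth [::] c i) (nth [::] c j).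
Proof.
move=> le_ij lt_jc; have c_le : sorted leI c by apply: sub_sorted c_sorted => x y /andP [].
by apply: (sorted_leq_nth leI_trans leI_refl) => //; rewrite inE; apply: leq_ltn_trans lt_jc.
Qed.

Lemma chain_neq t : t.+1 < size c -> nth [::] c t != nth [::] c t.+1.
Proof. by move=> lt_tc; case/andP: ((sortedP [::] c_sorted) t lt_tc). Qed.

Lemma chain_botI : botI d \in c.
Proof. by apply: chain_mem (botI_inI le_dn) _ => x /chain_inI /botI_min; right. Qed.

Lemma chain_topI : topI d n \in c.
Proof. by apply: chain_mem (topI_inI le_dn) _ => x /chain_inI /topI_max; left. Qed.

Lemma size_chain_gt0 : 0 < size c.
Proof. by case: c chain_botI. Qed.

Lemma chain_head : nth [::] c 0 = botI d.
Proof.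
have lt_bc : index (botI d) c < size c by rewrite index_mem chain_botI.
apply: leI_anti; last exact/botI_min/chain_inI/mem_nth/size_chain_gt0.
by rewrite -(nth_index [::] chain_botI); apply: chain_leI.
Qed.

Lemma chain_last : nth [::] c (size c).-1 = topI d n.
Proof.
have lt_tc : index (topI d n) c < size c by rewrite index_mem chain_topI.
have lt_lc : (size c).-1 < size c by rewrite ltn_predL size_chain_gt0.
apply: leI_anti; first exact/topI_max/chain_inI/mem_nth.
by rewrite -(nth_index [::] chain_topI); apply: chain_leI; rewrite // -ltnS prednK ?size_chain_gt0.
Qed.

(* The cover of c_t below c_(t+1) given by leI_cover is comparable to all of c,
   so it lies in c by maximality and must be c_(t+1). *)
Lemma chain_step t : t.+1 < size c ->
  exists2 p, validop d n p & rootop d p.1 p.2 (nth [::] c t) = Some (nth [::] c t.+1).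
Proof.
move=> lt_tc; have lt_tc' := ltnW lt_tc.
set x := nth [::] c t; set y := nth [::] c t.+1.
have [k [valid step Iz le_zy]] :=
  leI_cover (chain_inI (mem_nth _ lt_tc')) (chain_inI (mem_nth _ lt_tc))
    (chain_leI (leqnSn t) lt_tc) (chain_neq lt_tc).
have [sx _ _] := iffLR (inIP _ _ _) (chain_inI (mem_nth [::] lt_tc')).
have le_xz : leI x (raise k x) by apply: leI_raise; move: valid; rewrite /validop sx /=; lia.
exists (nth 0 x k, k.+1) => //=; rewrite step; congr Some.
have /(nthP [::]) [m lt_mc eq_z] : raise k x \in c.
  apply: chain_mem Iz _ => _ /(nthP [::]) [m lt_mc <-].
  have [le_mt | lt_tm] := leqP m t.
  - by left; apply: leI_trans le_xz; apply: chain_leI.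
  - by right; apply: leI_trans le_zy _; apply: chain_leI.
have [le_mt | lt_tm] := leqP m t.
- have le_zx : leI (raise k x) x by rewrite -eq_z; apply: chain_leI.
  by move/eqP: (raise_neq k x); case; apply: leI_anti.
- by apply: leI_anti le_zy _; rewrite -eq_z; apply: chain_leI.
Qed.

Lemma chain_sumn t : t < size c -> sumn (nth [::] c t) = sumn (botI d) + t.
Proof.
elim: t => [_ | t IH lt_tc]; first by rewrite chain_head addn0.
have [[s h] valid /rootop_Some [_ -> _]] := chain_step lt_tc.
have [sx _ _] := iffLR (inIP _ _ _) (chain_inI (mem_nth [::] (ltnW lt_tc))).
rewrite sumn_raise ?IH ?addnS ?(ltnW lt_tc) //.
by move: valid; rewrite /validop sx /=; lia.
Qed.

Lemma size_chain : size c = r.+1.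
Proof.
have lt_lc : (size c).-1 < size c by rewrite ltn_predL size_chain_gt0.
have := chain_sumn lt_lc; rewrite chain_last sumn_topI.
by have := size_chain_gt0; rewrite /r; lia.
Qed.

Lemma chain_labels : exists L, [/\ size L = r, all (validop d n) L &
  forall t, t < r ->
    rootop d (nth (0, 0) L t).1 (nth (0, 0) L t).2 (nth [::] c t) = Some (nth [::] c t.+1)].
Proof.
have [L [sL labelL]] : exists L, size L = r /\ forall t, t < r ->
    validop d n (nth (0, 0) L t) /\
    rootop d (nth (0, 0) L t).1 (nth (0, 0) L t).2 (nth [::] c t) = Some (nth [::] c t.+1).
  apply: (exists_seq_nth (0, 0) (P := fun t p => validop d n p /\
    rootop d p.1 p.2 (nth [::] c t) = Some (nth [::] c t.+1))) => t lt_tr.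
  have lt_tc : t.+1 < size c by rewrite size_chain ltnS.
  by have [p valid step] := chain_step lt_tc; exists p.
exists L; split=> // [|t /labelL [] //].
by apply/(all_nthP (0, 0)) => t; rewrite sL => /labelL [].
Qed.

Lemma chain_label_count L : size L = r -> all (validop d n) L ->
  (forall t, t < r ->
    rootop d (nth (0, 0) L t).1 (nth (0, 0) L t).2 (nth [::] c t) = Some (nth [::] c t.+1)) ->
  forall s h, validop d n (s, h) -> count_mem (s, h) L = 1.
Proof.
move=> sL /(all_nthP (0, 0)) validL step s h.
rewrite /validop /= => /andP [/andP [h_gt0 le_hd] /andP [le_hs lt_s]].
pose f t := nth 0 (nth [::] c t) h.-1.
have f_steps t : t < r -> f t.+1 = f t \/ f t.+1 = (f t).+1 by move/step; apply: rootop_nth.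
have [_ cnt] := count_unit_steps s f_steps.
have f0 : f 0 = h by rewrite /f chain_head nth_iota; lia.
have fr : f r = n - d + h.
  have -> : r = (size c).-1 by rewrite size_chain.
  by rewrite /f chain_last nth_iota; lia.
rewrite -(mkseq_nth (0, 0) L) count_map sL -[RHS](_ : (f 0 <= s < f r) = 1 :> nat); last first.
  by rewrite f0 fr le_hs lt_s.
rewrite -cnt; apply: eq_in_count => t; rewrite mem_iota => /andP [_ lt_tr] /=.
move: (step t lt_tr) (validL t (ltac:(by rewrite sL))).
case: (nth (0, 0) L t) => s' h' /= step_t /andP [/andP [h'_gt0 _] _].
exact: rootop_label h_gt0 h'_gt0 step_t.
Qed.

Lemma chain_step_to_max t : t < r -> n \notin nth [::] c t -> n \in nth [::] c t.+1 ->
  Some (nth [::] c t.+1) = rootop d n.-1 d (nth [::] c t).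
Proof.
move=> lt_tr x_notin y_in; have lt_tc : t.+1 < size c by rewrite size_chain ltnS.
have [[s h] /andP [range_h _] step] := chain_step lt_tc.
have Ix := chain_inI (mem_nth [::] (ltnW lt_tc)).
by case: (rootop_reach_max Ix range_h x_notin y_in step) => es eh; rewrite -step es eh.
Qed.

End MaximalChain.

Theorem proposition2p14 (d n : nat) :
  1 <= d -> d < n ->
  (* (i) *)
  (forall i j : seq nat, inI d n i -> inI d n j ->
     (leI i j <->
      exists ops : seq (nat * nat),
        all (validop d n) ops /\ applyops d ops (Some i) = Some j)) /\
  (forall c : seq (seq nat),
     sorted ltI c -> maxChain d n (fun x => x \in c) ->
     (* (ii) *)
     (size c = (d * (n - d)).+1 /\
      exists L : seq (nat * nat),
        size L = d * (n - d) /\ all (validop d n) L /\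
        (forall t, 1 <= t <= d * (n - d) ->
           Some (nth [::] c t) =
           rootop d (nth (0, 0) L t.-1).1 (nth (0, 0) L t.-1).2 (nth [::] c t.-1)) /\
        (forall s h, validop d n (s, h) -> count_mem (s, h) L = 1)) /\
     (* (iii) *)
     (forall t, t < d * (n - d) ->
        (forall h, 1 <= h <= t -> n \notin nth [::] c h) ->
        (forall h, t < h <= d * (n - d) -> n \in nth [::] c h) ->
        Some (nth [::] c t.+1) = rootop d n.-1 d (nth [::] c t))).
Proof.
move=> d_gt0 lt_dn; have le_dn := ltnW lt_dn; split.
  move=> i j Ii Ij; split; first exact: leI_applyops.
  by case=> ops [valid_ops apply_ops]; apply: applyops_leI valid_ops apply_ops _; case/inIP: Ii.
move=> c c_sorted c_max; split; last first.
  move=> t lt_tr notin_before in_after; apply: chain_step_to_max => //; last first.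
    by apply: in_after; lia.
  case: t {lt_tr in_after} notin_before => [_ | t notin_before].
  - by rewrite (chain_head le_dn c_sorted c_max) mem_iota; lia.
  - by apply: notin_before; lia.
have [L [sL validL step]] := chain_labels le_dn c_sorted c_max.
split; first exact: size_chain.
exists L; do 3!split=> //; last exact: (chain_label_count le_dn c_sorted c_max sL validL step).
by move=> t /andP [t_gt0 le_tr]; rewrite -(prednK t_gt0) step // prednK //; lia.
Qed.
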